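(* Let $\Bbbk$ be an algebraically closed field of characteristic zero. Let $r,s,a,b$ be positive integers with $a\le b$, $r\ge s$, and let $\lambda=p/q>0$ in lowest terms, such that $B=\begin{bmatrix} r & s\\ -\lambda r & -\lambda s\\ a & b\end{bmatrix}$ is an integer matrix of rank $2$. Let $I(B)=\langle x^rz^a-y^{\lambda r},\ x^sz^b-y^{\lambda s}\rangle\subseteq\Bbbk[x,y,z]$ and $P=\mathbb{N}^2\times\mathbb{Z}$, with $\Bbbk[P]=\Bbbk[z^{\pm1}][x,y]$. Then \begin{align*} &\{(u_x,u_y)\in\mathbb{N}^2\mid \exists u_z\in\mathbb{Z} \text{ such that } (u_x,u_y,u_z) \text{ is an infinite vertex of } \mathscr{G}_P(\Bbbk[P]\cdot I(B))\}\\ =&\{(u_x,u_y)\in\mathbb{N}^2\mid \exists u_z\in\mathbb{N} \text{ such that } (u_x,u_y,u_z) \text{ is an infinite vertex of } \mathscr{G}(I(B))\}. \end{align*} Consequently, the primary component of $I(B)$ corresponding to the associated prime $\langle x,y\rangle$ is \[ (I(B):z^\infty)+\langle x^{u_x}y^{u_y}\mid \exists u_z\in\mathbb{N} \text{ such that } (u_x,u_y,u_z) \text{ is an infinite vertex of } G(B)\rangle . \]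
   Context: For a monoid $P\subseteq\mathbb{Z}^3$ and a binomial ideal $I\subseteq\Bbbk[P]$, the graph $\mathscr{G}_P(I)$ has vertex set $P$ and an edge between $u,v$ iff $x^u-\rho x^v\in I$ for some nonzero $\rho\in\Bbbk$; $\mathscr{G}(I)=\mathscr{G}_{\mathbb{N}^3}(I)$. $G(B)$ is the graph with vertex set $\mathbb{N}^3$ in which $u,v$ are adjacent iff $u-v$ or $v-u$ is a column of $B$. A vertex is infinite if its connected component has infinitely many vertices. $(I:z^\infty)$ is the saturation of $I$ with respect to $z$. *)

From HB Require Import structures.
From mathcomp Require Import all_boot all_order all_algebra.
From mathcomp Require Import mpoly.
Set Implicit Arguments. Unset Strict Implicit. Unset Printing Implicit Defensive.
Import Order.TTheory GRing.Theory Num.Theory.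
Local Open Scope ring_scope.

Definition vx {K : fieldType} : {mpoly K[3]} := 'X_(@Ordinal 3 0 isT).
Definition vy {K : fieldType} : {mpoly K[3]} := 'X_(@Ordinal 3 1 isT).
Definition vz {K : fieldType} : {mpoly K[3]} := 'X_(@Ordinal 3 2 isT).

Definition mono {K : fieldType} (a b c : nat) : {mpoly K[3]} :=
  vx ^+ a * vy ^+ b * vz ^+ c.

Definition in_ideal {R : comNzRingType} (S : R -> Prop) (f : R) : Prop :=
  exists (n : nat) (c g : 'I_n -> R),
    (forall i, S (g i)) /\ f = \sum_(i < n) c i * g i.

Definition gens {R : eqType} (l : seq R) : R -> Prop := fun g => g \in l.

Definition ideal_add {R : comNzRingType} (I J : R -> Prop) (f : R) : Prop :=
  exists g h, I g /\ J h /\ f = g + h.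

Definition saturation_z {K : fieldType} (I : {mpoly K[3]} -> Prop) f : Prop :=
  exists n : nat, I (vz ^+ n * f).

(* The primary component of I for the (minimal) prime <x,y>:
   the contraction of the localization, {f | exists g notin <x,y>, g f in I}. *)
Definition primary_component_xy {K : fieldType} (I : {mpoly K[3]} -> Prop) f :=
  exists g, ~ in_ideal (gens [:: vx; vy]) g /\ I (g * f).

Definition IB {K : fieldType} (r s a b lr ls : nat) : {mpoly K[3]} -> Prop :=
  in_ideal (gens [:: mono r 0 a - mono 0 lr 0; mono s 0 b - mono 0 ls 0]).

Definition edgeN {K : fieldType} (I : {mpoly K[3]} -> Prop) (u v : nat * nat * nat) :=
  exists rho : K, rho != 0 /\
    I (mono u.1.1 u.1.2 u.2 - rho *: mono v.1.1 v.1.2 v.2).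

(* Graph G_P(K[P] I) on P = N^2 x Z, where K[P] = K[z^{+-1}][x,y] is the
   localization of K[x,y,z] at z.  An element x^u - rho x^v of K[P] lies in
   K[P].I iff z^n (x^u - rho x^v) lies in I for some n with z^n x^u, z^n x^v
   polynomial monomials (unfolding of the localization). *)
Definition edgeP {K : fieldType} (I : {mpoly K[3]} -> Prop) (u v : nat * nat * int) :=
  exists rho : K, rho != 0 /\
    exists n : nat, (0 <= u.2 + n%:Z)%R /\ (0 <= v.2 + n%:Z)%R /\
      I (mono u.1.1 u.1.2 (absz (u.2 + n%:Z)) - rho *: mono v.1.1 v.1.2 (absz (v.2 + n%:Z))).

Definition edgeB (c1 c2 : int * int * int) (u v : nat * nat * nat) : Prop :=
  let d := ((u.1.1%:Z - v.1.1%:Z), (u.1.2%:Z - v.1.2%:Z), (u.2%:Z - v.2%:Z)) in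
  let md := (- d.1.1, - d.1.2, - d.2) in
  d = c1 \/ d = c2 \/ md = c1 \/ md = c2.

Inductive connected {T : Type} (e : T -> T -> Prop) (u : T) : T -> Prop :=
| conn_refl : connected e u u
| conn_step v w : connected e u v -> e v w -> connected e u w.

Definition infinite_vertex {T : eqType} (e : T -> T -> Prop) (u : T) : Prop :=
  ~ exists l : seq T, forall v, connected e u v -> v \in l.

(* Write ~ for connectedness in G(B) and w(u) = p u_x + q u_y. Since p r = q (λ r) and
   p s = q (λ s), w is constant on components, so a component lies over finitely many
   (u_x, u_y); it is infinite iff it contains some u and u + k e_z with k > 0.

   For a set S of exponents, summing the coefficients of f over S is a linear form, and it
   vanishes on I(B) when S is a union of components. With S the component of u it shows that
   x^u - ρ x^v ∈ I(B) forces u ~ v, so G(I(B)) has the components of G(B); those of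
   G_P(k[P] I(B)) are their shifts in z, which gives the first equality.

   For the primary component let g f ∈ I(B) with g ∉ <x,y>, and call u, v stably connected
   when u + n e_z ~ v + n e_z for some n. The same linear forms applied to g f, with an
   induction on w, show that over each column (u_x, u_y) without infinite vertices the
   coefficients of f sum to zero on every stable class, so that part of f is z-saturated;
   the other monomials of f are multiples of the generators x^u_x y^u_y. Conversely
   u ~ u + k e_z puts z^u_z (1 - z^k) x^u_x y^u_y in I(B), with z^u_z (1 - z^k) ∉ <x,y>. *)

From HB Require Import structures.
From mathcomp Require Import all_boot all_order all_algebra.
From mathcomp Require Import mpoly zify boolp.
Import Order.TTheory GRing.Theory Num.Theory.
Local Open Scope ring_scope.
Set Implicit Arguments. Unset Strict Implicit. Unset Printing Implicit Defensive.

Section IdealMembership.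
Variable R : comNzRingType.
Implicit Types (S P : R -> Prop) (f g h : R).

Lemma in_ideal0 S : in_ideal S 0.
Proof.
by exists 0%N, (fun _ => 0), (fun _ => 0); split; [case | rewrite big_ord0].
Qed.

Lemma in_ideal_gen S g : S g -> in_ideal S g.
Proof.
by move=> Sg; exists 1%N, (fun _ => 1), (fun _ => g); rewrite big_ord1 mul1r.
Qed.

Lemma in_idealD S f g : in_ideal S f -> in_ideal S g -> in_ideal S (f + g).
Proof.
move=> [n1 [c1 [g1 [S1 ->]]]] [n2 [c2 [g2 [S2 ->]]]].
pose glue T (x1 : 'I_n1 -> T) (x2 : 'I_n2 -> T) i :=
  match split i with inl j => x1 j | inr k => x2 k end.
exists (n1 + n2)%N, (glue _ c1 c2), (glue _ g1 g2); split.
  by move=> i; rewrite /glue; case: split.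
by rewrite big_split_ord /glue; congr (_ + _); apply: eq_bigr => i _;
  [rewrite (unsplitK (inl i)) | rewrite (unsplitK (inr i))].
Qed.

Lemma in_idealMl S h f : in_ideal S f -> in_ideal S (h * f).
Proof.
move=> [n [c [g [Sg ->]]]]; exists n, (fun i => h * c i), g; split => //.
by rewrite mulr_sumr; apply: eq_bigr => i _; rewrite mulrA.
Qed.

Lemma in_idealMr S h f : in_ideal S f -> in_ideal S (f * h).
Proof. by rewrite mulrC; apply: in_idealMl. Qed.

Lemma in_idealN S f : in_ideal S f -> in_ideal S (- f).
Proof. by rewrite -mulN1r; apply: in_idealMl. Qed.

Lemma in_ideal_sum S (I : Type) (s : seq I) (Q : pred I) (F : I -> R) :
  (forall i, Q i -> in_ideal S (F i)) -> in_ideal S (\sum_(i <- s | Q i) F i).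
Proof.
move=> IF; elim: s => [|i s IHs]; first by rewrite big_nil; apply: in_ideal0.
by rewrite big_cons; case: ifP => // Qi; apply: in_idealD (IF _ Qi) IHs.
Qed.

Lemma in_ideal_min S P f :
  P 0 -> (forall g h, P g -> P h -> P (g + h)) -> (forall g h, P h -> P (g * h)) ->
  (forall g, S g -> P g) -> in_ideal S f -> P f.
Proof.
move=> P0 PD PM SP [n [c [g [Sg ->]]]].
by elim/big_rec: _ => // i x _ Px; apply: PD Px; apply/PM/SP.
Qed.

End IdealMembership.

Section Connectivity.
Variables (T : Type) (e : T -> T -> Prop).

Lemma connected_trans u v w : connected e u v -> connected e v w -> connected e u w.
Proof. by move=> Cuv; elim=> // x y _ Cux Exy; apply: conn_step Cux Exy. Qed.

Lemma connected_edge u v : e u v -> connected e u v.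
Proof. exact: conn_step (conn_refl _ _). Qed.

Lemma connected_sym : (forall u v, e u v -> e v u) ->
  forall u v, connected e u v -> connected e v u.
Proof.
move=> esym u v; elim=> [|x y _ Cxu Exy]; first exact: conn_refl.
exact: connected_trans (connected_edge (esym _ _ Exy)) Cxu.
Qed.

End Connectivity.

Lemma connected_sub (T : Type) (e e' : T -> T -> Prop) :
  (forall u v, e u v -> connected e' u v) ->
  forall u v, connected e u v -> connected e' u v.
Proof.
move=> ee' u v; elim=> [|x y _ Cux Exy]; first exact: conn_refl.
exact: connected_trans Cux (ee' _ _ Exy).
Qed.

Lemma connected_map (T T' : Type) (e : T -> T -> Prop) (e' : T' -> T' -> Prop)
    (F : T -> T') :
  (forall u v, e u v -> e' (F u) (F v)) ->
  forall u v, connected e u v -> connected e' (F u) (F v).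
Proof.
move=> eF u v; elim=> [|x y _ Cux Exy]; first exact: conn_refl.
exact: conn_step Cux (eF _ _ Exy).
Qed.

Lemma infinite_vertex_connected (T : eqType) (e : T -> T -> Prop) u v :
  connected e u v -> infinite_vertex e v -> infinite_vertex e u.
Proof.
move=> Cuv infv [l Hl]; apply: infv; exists l => w Cvw.
exact/Hl/(connected_trans Cuv Cvw).
Qed.

Lemma infinite_vertex_eq (T : eqType) (e e' : T -> T -> Prop) u :
  (forall v, connected e u v <-> connected e' u v) ->
  infinite_vertex e u <-> infinite_vertex e' u.
Proof.
by move=> ee'; split=> infu [l Hl]; apply: infu; exists l => v /ee'; apply: Hl.
Qed.

Lemma bounded_section_finite (d : Order.disp_t) (Z : orderType d)
    (C : nat * nat * Z -> Prop) M :
  (forall v, C v -> (v.1.1 <= M)%N /\ (v.1.2 <= M)%N) ->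
  (forall x y z z', C (x, y, z) -> C (x, y, z') -> (z < z')%O -> False) ->
  exists l : seq (nat * nat * Z), forall v, C v -> v \in l.
Proof.
move=> Cbd Cuniq.
pose over i j : seq (nat * nat * Z) :=
  if pselect (exists z, C (i, j, z)) is left H then [:: (i, j, projT1 (cid H))] else [::].
exists (flatten [seq over i j | i <- iota 0 M.+1, j <- iota 0 M.+1]) => -[[x y] z] Cv.
have [xM yM] := Cbd _ Cv; apply/flattenP; exists (over x y).
  by apply/allpairsP; exists (x, y); rewrite !mem_iota !ltnS xM yM.
rewrite /over; case: pselect => [H|[]]; last by exists z.
case: cid => z' Cz' /=; rewrite mem_seq1; case: (ltgtP z' z) => [lt|lt|-> //].
  by case: (Cuniq _ _ _ _ Cz' Cv lt).
by case: (Cuniq _ _ _ _ Cv Cz' lt).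
Qed.

Section ClasswiseSum.
Variables (T : eqType) (R : nzRingType) (M : lmodType R) (P : M -> Prop).
Hypotheses (P0 : P 0) (PD : forall x y, P x -> P y -> P (x + y))
  (PZ : forall k x, P x -> P (k *: x)).
Variables (e : rel T) (X : T -> M).
Hypotheses (e_refl : reflexive e) (e_sym : ssrbool.symmetric e) (e_trans : transitive e).
Hypothesis PX : forall i j, e i j -> P (X i - X j).

(* In a class with vanishing coefficient sum, [c i0 *: X i0] absorbs into
   [\sum c j *: (X j - X i0)]. *)
Lemma classwise_sum (s : seq T) (c : T -> R) :
  {in s, forall i, \sum_(j <- s | e i j) c j = 0} -> P (\sum_(i <- s) c i *: X i).
Proof.
have [N] := ubnP (size s); elim: N s => // N IHN [|i0 s] /=; first by rewrite big_nil.
rewrite ltnS => size_s class0.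
have := class0 i0 (mem_head _ _); rewrite big_cons e_refl => sum_i0.
rewrite big_cons (bigID (e i0)) /= addrA.
have -> : c i0 *: X i0 + \sum_(j <- s | e i0 j) c j *: X j =
          \sum_(j <- s | e i0 j) c j *: (X j - X i0).
  have -> : c i0 = - \sum_(j <- s | e i0 j) c j by apply/eqP; rewrite -addr_eq0 sum_i0.
  rewrite scaleNr scaler_suml addrC -sumrB.
  by apply: eq_bigr => j _; rewrite scalerBr.
apply: PD.
  by elim/big_rec: _ => // j x ei0j Px; apply: PD Px; apply: PZ; apply: PX; rewrite e_sym.
rewrite -big_filter; apply: IHN; first by rewrite size_filter (leq_ltn_trans (count_size _ _)).
move=> i; rewrite mem_filter => /andP[ni0i si].
have := class0 i; rewrite inE si orbT => /(_ isT).
rewrite big_cons (_ : e i i0 = false); last by rewrite e_sym (negbTE ni0i).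
rewrite (bigID (e i0)) /= big1 ?add0r; last first.
  by move=> j /andP[eij ei0j]; move/negP: ni0i; case; apply: e_trans ei0j _; rewrite e_sym.
by rewrite big_filter_cond; under eq_bigl do rewrite andbC.
Qed.

Lemma classwise_sum_filter (S : pred T) (s : seq T) (c : T -> R) :
  (forall i j, e i j -> S i -> S j) ->
  {in s, forall i, S i -> \sum_(j <- s | e i j) c j = 0} ->
  P (\sum_(i <- s | S i) c i *: X i).
Proof.
move=> S_closed class0; rewrite -big_filter; apply: classwise_sum => i.
rewrite mem_filter => /andP[Si si]; rewrite big_filter_cond -[RHS](class0 i si Si).
by apply: eq_bigl => j; case eij: (e i j); rewrite ?andbF // andbT (S_closed i j eij Si).
Qed.

End ClasswiseSum.

Lemma classwise_sum_eq0 (T : eqType) (R : nzRingType) (e : rel T) (S : pred T)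
    (s : seq T) (c : T -> R) :
  reflexive e -> ssrbool.symmetric e -> transitive e -> (forall i j, e i j -> S i -> S j) ->
  {in s, forall i, S i -> \sum_(j <- s | e i j) c j = 0} ->
  \sum_(i <- s | S i) c i = 0.
Proof.
move=> e_refl e_sym e_trans S_closed class0.
have /= := @classwise_sum_filter T R R^o (fun x => x = 0) erefl _ _ e (fun _ => 1)
  e_refl e_sym e_trans _ S s c S_closed class0.
rewrite /GRing.scale /=; under eq_bigr do rewrite mulr1; apply.
- by move=> x y -> ->; rewrite addr0.
- by move=> k x ->; rewrite mulr0.
- by move=> i j _; rewrite subrr.
Qed.

Lemma int_seq_max (s : seq int) : s != [::] -> exists2 x, x \in s & {in s, forall y, y <= x}.
Proof.
elim: s => // x s IHs _; have [->|s_nil] := eqVneq s [::].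
  by exists x; rewrite ?mem_head // => y; rewrite inE => /eqP->.
have [z zs z_max] := IHs s_nil; have [xz|zx] := leP x z.
  by exists z; [rewrite inE zs orbT | move=> y; rewrite inE => /orP[/eqP->|/z_max]].
exists x; first exact: mem_head.
by move=> y; rewrite inE => /orP[/eqP->//|/z_max yz]; apply: le_trans yz (ltW zx).
Qed.

(* If [c] is not identically zero and [A] has finite support, the correlation
   [d |-> \sum_k c k * A (d + k)] is nonzero at [max supp A - min supp c]. *)
Lemma correlation_eq0 (R : idomainType) (A : int -> R) (c : nat -> R) (ks : seq nat)
    (D : seq int) :
  uniq ks -> (forall k, c k != 0 -> k \in ks) -> (exists k, c k != 0) ->
  (forall d, A d != 0 -> d \in D) ->
  (forall d, \sum_(k <- ks) c k * A (d + k%:Z) = 0) -> forall d, A d = 0.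
Proof.
move=> ks_uniq c_ks c_nz A_D corr0 d0; apply/eqP; apply: contraT => Ad0.
have [kmin ckmin kmin_min] := ex_minnP c_nz.
pose NZ := [seq d <- D | A d != 0].
have d0NZ : d0 \in NZ by rewrite mem_filter Ad0 A_D.
have [|dmax dmaxNZ dmax_max] := @int_seq_max NZ; first by apply: contraTneq d0NZ => ->.
have Admax : A dmax != 0 by move: dmaxNZ; rewrite mem_filter => /andP[].
have := corr0 (dmax - kmin%:Z); rewrite (bigD1_seq kmin) ?c_ks //= subrK big1_seq.
  by rewrite addr0 => /eqP; rewrite mulf_eq0 (negbTE ckmin) (negbTE Admax).
move=> k /andP[k_kmin _]; have [->|ck] := eqVneq (c k) 0; first by rewrite mul0r.
have lt_kmin : (kmin < k)%N by rewrite ltn_neqAle eq_sym k_kmin kmin_min.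
apply/eqP; rewrite mulf_eq0; apply/orP; right; apply: contraT => Ak.
have := dmax_max (dmax - kmin%:Z + k%:Z); rewrite mem_filter Ak A_D // => /(_ isT).
lia.
Qed.

Section CoefSum.
Variables (n : nat) (R : comNzRingType).
Implicit Types (S : pred 'X_{1..n}) (f g : {mpoly R[n]}).

Definition coef_sum S f : R := \sum_(m <- msupp f | S m) f@_m.

Lemma coef_sum_seq S f (s : seq 'X_{1..n}) :
  uniq s -> {subset msupp f <= s} -> coef_sum S f = \sum_(m <- s | S m) f@_m.
Proof.
move=> s_uniq fs; rewrite [RHS](bigID (mem (msupp f))) /= [X in _ + X]big1; last first.
  by move=> m /andP[_ /memN_msupp_eq0].
rewrite addr0 /coef_sum -[LHS]big_filter -[RHS]big_filter; apply: perm_big.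
apply: uniq_perm; rewrite ?filter_uniq ?msupp_uniq // => m; rewrite !mem_filter.
by case fm: (m \in msupp f); rewrite ?andbF // (fs _ fm) !andbT.
Qed.

Lemma eq_coef_sum S S' f : S =i S' -> coef_sum S f = coef_sum S' f.
Proof. exact: eq_bigl. Qed.

Lemma coef_sumD S f g : coef_sum S (f + g) = coef_sum S f + coef_sum S g.
Proof.
set s := undup (msupp f ++ msupp g ++ msupp (f + g)).
have sum_s h : h \in [:: f; g; f + g] -> coef_sum S h = \sum_(m <- s | S m) h@_m.
  move=> hfg; apply: coef_sum_seq; first exact: undup_uniq.
  move: hfg; rewrite !inE => /or3P[] /eqP-> m mh;
  by rewrite mem_undup !mem_cat mh ?orbT.
rewrite !sum_s ?inE ?eqxx ?orbT // -big_split.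
by apply: eq_bigr => m _; rewrite mcoeffD.
Qed.

Lemma coef_sumZ S c f : coef_sum S (c *: f) = c * coef_sum S f.
Proof.
rewrite (@coef_sum_seq _ _ (msupp f)) ?msupp_uniq //; last exact: msuppZ_le.
by rewrite mulr_sumr; apply: eq_bigr => m _; rewrite mcoeffZ.
Qed.

Lemma coef_sum0 S : coef_sum S 0 = 0.
Proof. by rewrite -(scale0r 0) coef_sumZ mul0r. Qed.

Lemma coef_sumB S f g : coef_sum S (f - g) = coef_sum S f - coef_sum S g.
Proof. by rewrite coef_sumD -scaleN1r coef_sumZ mulN1r. Qed.

Lemma coef_sum_sum S (I : Type) (s : seq I) (Q : pred I) (F : I -> {mpoly R[n]}) :
  coef_sum S (\sum_(i <- s | Q i) F i) = \sum_(i <- s | Q i) coef_sum S (F i).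
Proof.
elim: s => [|i s IHs]; first by rewrite !big_nil coef_sum0.
by rewrite !big_cons; case: ifP; rewrite ?coef_sumD IHs.
Qed.

Lemma coef_sumX S m : coef_sum S 'X_[m] = (S m)%:R.
Proof. by rewrite /coef_sum msuppX big_cons big_nil mcoeffX eqxx addr0; case: (S m). Qed.

Lemma coef_sum_mulX S f m : coef_sum S (f * 'X_[m]) = coef_sum [pred w | S (w + m)%MM] f.
Proof.
rewrite {1}(mpolyE f) mulr_suml coef_sum_sum [RHS]/coef_sum [RHS]big_mkcond.
apply: eq_bigr => w _.
by rewrite -scalerAl -mpolyXD coef_sumZ coef_sumX /=; case: (S _); rewrite ?mulr1 ?mulr0.
Qed.

Lemma coef_sum_mull S g f :
  coef_sum S (g * f) = \sum_(w <- msupp g) g@_w * coef_sum [pred m | S (m + w)%MM] f.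
Proof.
rewrite {1}(mpolyE g) mulr_suml coef_sum_sum; apply: eq_bigr => w _.
by rewrite -scalerAl mulrC coef_sumZ coef_sum_mulX.
Qed.

End CoefSum.

Notation vertex := (nat * nat * nat)%type.

Definition ix : 'I_3 := @Ordinal 3 0 isT.
Definition iy : 'I_3 := @Ordinal 3 1 isT.
Definition iz : 'I_3 := @Ordinal 3 2 isT.

Definition mnm_of (u : vertex) : 'X_{1..3} :=
  [multinom nth 0%N [:: u.1.1; u.1.2; u.2] i | i < 3].
Definition vertex_of (m : 'X_{1..3}) : vertex := (m ix, m iy, m iz).

Definition vadd (u w : vertex) : vertex := (u.1.1 + w.1.1, u.1.2 + w.1.2, u.2 + w.2)%N.
Definition zvec (k : nat) : vertex := (0, 0, k)%N.

Lemma mnm_of_x u : mnm_of u ix = u.1.1. Proof. by rewrite mnmE. Qed.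
Lemma mnm_of_y u : mnm_of u iy = u.1.2. Proof. by rewrite mnmE. Qed.
Lemma mnm_of_z u : mnm_of u iz = u.2. Proof. by rewrite mnmE. Qed.

Lemma vertex_ofK : cancel vertex_of mnm_of.
Proof.
by move=> m; apply/mnmP => -[[|[|[|i]]] Hi] //; rewrite mnmE /=; congr (m _); apply: val_inj.
Qed.

Lemma mnm_ofK : cancel mnm_of vertex_of.
Proof. by case=> [[x y] z]; rewrite /vertex_of mnm_of_x mnm_of_y mnm_of_z. Qed.

Lemma vertex_ofD m m' : vertex_of (m + m')%MM = vadd (vertex_of m) (vertex_of m').
Proof. by rewrite /vertex_of /vadd !mnmDE. Qed.

Lemma vaddAC u w w' : vadd (vadd u w) w' = vadd (vadd u w') w.
Proof. by rewrite /vadd /=; congr (_, _, _); lia. Qed.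

Lemma vadd_zvec u j k : vadd (vadd u (zvec j)) (zvec k) = vadd u (zvec (j + k)).
Proof. by rewrite /vadd /zvec /= !addn0 addnA. Qed.

Section Monomials.
Variable K : fieldType.

Definition monov (u : vertex) : {mpoly K[3]} := mono u.1.1 u.1.2 u.2.

Lemma monovE u : monov u = 'X_[mnm_of u].
Proof.
rewrite /monov /mono /vx /vy /vz !mpolyXn -!mpolyXD; congr 'X_[_].
by apply/mnmP => -[[|[|[|i]]] Hi] //; rewrite !mnmE //= ?mulmnE !mnm1E /=; lia.
Qed.

Lemma monovD u w : monov (vadd u w) = monov u * monov w.
Proof.
by rewrite !monovE -mpolyXD; congr 'X_[_]; rewrite -[RHS]vertex_ofK vertex_ofD !mnm_ofK.
Qed.

Lemma monov_zvec k : monov (zvec k) = vz ^+ k.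
Proof. by rewrite /monov /mono /= !expr0 !mul1r. Qed.

End Monomials.
Arguments monov {K} u.

Section Saturation.
Variables (K : fieldType) (G : {mpoly K[3]} -> Prop).
Implicit Types f g : {mpoly K[3]}.

Lemma saturation_z0 : saturation_z (in_ideal G) 0.
Proof. by exists 0%N; rewrite mulr0; apply: in_ideal0. Qed.

Lemma saturation_zD f g :
  saturation_z (in_ideal G) f -> saturation_z (in_ideal G) g ->
  saturation_z (in_ideal G) (f + g).
Proof.
move=> [n If] [k Ig]; exists (n + k)%N; rewrite exprD mulrDr.
apply: in_idealD; first by rewrite mulrAC; apply: in_idealMr.
by rewrite -mulrA; apply: in_idealMl.
Qed.

Lemma saturation_zZ c f : saturation_z (in_ideal G) f -> saturation_z (in_ideal G) (c *: f).
Proof. by move=> [n If]; exists n; rewrite -scalerAr -mul_mpolyC; apply: in_idealMl. Qed.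

End Saturation.

Section ZPart.
Variable K : fieldType.
Implicit Types f g : {mpoly K[3]}.

(* The ring morphism K[x,y,z] -> K[z] sending x, y to 0; its kernel is <x,y>. *)
Definition zpart : {mpoly K[3]} -> {poly K} :=
  mmap polyC (fun i : 'I_3 => if i == iz then 'X else 0).

Lemma zpartM f g : zpart (f * g) = zpart f * zpart g.
Proof. by rewrite /zpart rmorphM. Qed.

Lemma zpart_vz k : zpart (vz ^+ k) = 'X^k.
Proof. by rewrite /zpart rmorphXn /= mmapX mmap1U. Qed.

Lemma zpart_xy f : in_ideal (gens [:: vx; vy]) f -> zpart f = 0.
Proof.
apply: (@in_ideal_min _ _ (fun h => zpart h = 0)) => [|g h gE hE|g h hE|g]; rewrite ?zpartM.
- exact: mmap0.
- by rewrite /zpart raddfD /= -/(zpart g) -/(zpart h) gE hE addr0.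
- by rewrite hE mulr0.
by rewrite /gens !inE => /orP[] /eqP->; rewrite /zpart mmapX mmap1U.
Qed.

Lemma not_in_xy_zcoef g :
  ~ in_ideal (gens [:: vx; vy]) g -> exists k, g@_(mnm_of (zvec k)) != 0.
Proof.
have Xsplit (m : 'X_{1..3}) (i : 'I_3) :
    (0 < m i)%N -> 'X_[m] = 'X_i * 'X_[(m - U_(i))%MM] :> {mpoly K[3]}.
  move=> mi; rewrite -mpolyXD; congr 'X_[_]; apply/mnmP => j.
  by rewrite mnmDE mnmBE mnm1E; case: (i =P j) => [<-|] /=; lia.
move=> g_xy; apply: contrapT => no_zcoef; apply: g_xy.
rewrite (mpolyE g) big_seq; apply: in_ideal_sum => m gm.
case: (posnP (m ix)) => [mx0|mx]; last first.
  rewrite (Xsplit _ _ mx) scalerAr mulrC; apply/in_idealMl/in_ideal_gen.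
  by rewrite /gens !inE eqxx.
case: (posnP (m iy)) => [my0|my]; last first.
  rewrite (Xsplit _ _ my) scalerAr mulrC; apply/in_idealMl/in_ideal_gen.
  by rewrite /gens !inE eqxx orbT.
case: no_zcoef; exists (m iz).
suff -> : mnm_of (zvec (m iz)) = m by rewrite -mcoeff_msupp.
by rewrite -[RHS]vertex_ofK /vertex_of mx0 my0.
Qed.

End ZPart.

Section LocalXY.
Variables (K : fieldType) (G : {mpoly K[3]} -> Prop).
Implicit Types f g : {mpoly K[3]}.

(* Multipliers are tested with [zpart] rather than against <x,y>, so that products of
   multipliers remain multipliers ({poly K} is a domain). *)
Definition local_xy f := exists g, zpart g != 0 /\ in_ideal G (g * f).

Lemma local_xy_primary f : local_xy f -> primary_component_xy (in_ideal G) f.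
Proof. by move=> [g [gz Igf]]; exists g; split=> // /zpart_xy g0; rewrite g0 eqxx in gz. Qed.

Lemma local_xyD f g : local_xy f -> local_xy g -> local_xy (f + g).
Proof.
move=> [h [hz Ihf]] [h' [h'z Ih'g]]; exists (h * h'); split.
  by rewrite zpartM mulf_neq0.
rewrite mulrDr; apply: in_idealD; first by rewrite mulrAC; apply: in_idealMr.
by rewrite -mulrA; apply: in_idealMl.
Qed.

Lemma local_xyMl g f : local_xy f -> local_xy (g * f).
Proof. by move=> [h [hz Ihf]]; exists h; split=> //; rewrite mulrCA; apply: in_idealMl. Qed.

Lemma saturation_local_xy f : saturation_z (in_ideal G) f -> local_xy f.
Proof. by move=> [n Izf]; exists (vz ^+ n); rewrite zpart_vz monic_neq0 ?monicXn. Qed.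

End LocalXY.

Definition gen_step (r l a : nat) (u v : vertex) :=
  exists w, u = vadd w (r, 0, a)%N /\ v = vadd w (0, l, 0)%N.

Definition weight (p q : nat) (u : vertex) := (p * u.1.1 + q * u.1.2)%N.

Definition zlift (u : nat * nat * int) (n : nat) : vertex := (u.1.1, u.1.2, absz (u.2 + n%:Z)).

Lemma zlift_add u n k : 0 <= u.2 + n%:Z -> zlift u (n + k) = vadd (zlift u n) (zvec k).
Proof.
case: u => [[x y] z] /= zn; rewrite /zlift /vadd /= !addn0 PoszD addrA.
by case: (z + n%:Z) zn.
Qed.

Section BinomialGraph.
Variables (r s a b lr ls : nat).

Local Notation IBgens := (gens [:: mono r 0 a - mono 0 lr 0; mono s 0 b - mono 0 ls 0]).
Local Notation eB := (edgeB (r%:Z, - lr%:Z, a%:Z) (s%:Z, - ls%:Z, b%:Z)).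
Local Notation connB := (connected eB).
Local Notation infB := (infinite_vertex eB).

Lemma edgeB_iff u v : eB u v <->
  [\/ gen_step r lr a u v, gen_step s ls b u v, gen_step r lr a v u | gen_step s ls b v u].
Proof.
case: u v => [[x y] z] [[x' y'] z']; rewrite /edgeB /gen_step /vadd /=.
have pairE (A B C : Type) (a1 a2 : A) (b1 b2 : B) (c1 c2 : C) :
  (a1, b1, c1) = (a2, b2, c2) <-> [/\ a1 = a2, b1 = b2 & c1 = c2].
  by split=> [[-> -> ->]|[-> -> ->]].
rewrite !pairE; split.
  by case=> [|[|[|]]] [E1 E2 E3]; [constructor 1|constructor 2|constructor 3|constructor 4];
    [exists (x', y, z') | exists (x', y, z') | exists (x, y', z) | exists (x, y', z)];
    rewrite !pairE /=; split; split; lia.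
by case=> -[[[x0 y0] z0] [/pairE[-> -> ->] /pairE[-> -> ->]]] /=;
  [left | right; left | right; right; left | right; right; right]; split; lia.
Qed.

Lemma edgeB_sym u v : eB u v -> eB v u.
Proof.
by rewrite !edgeB_iff; case=> H; [constructor 3 | constructor 4 | constructor 1 | constructor 2].
Qed.

Lemma connB_sym u v : connB u v -> connB v u.
Proof. exact: connected_sym edgeB_sym u v. Qed.

Lemma edgeB_shift w u v : eB u v -> eB (vadd u w) (vadd v w).
Proof.
have E (x y t : nat) : (x + t)%N%:Z - (y + t)%N%:Z = x%:Z - y%:Z by lia.
by rewrite /edgeB /vadd /= !E.
Qed.

Lemma connB_shift w u v : connB u v -> connB (vadd u w) (vadd v w).
Proof. exact: connected_map (edgeB_shift w) u v. Qed.

Lemma infB_shift w u : infB u -> infB (vadd u w).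
Proof.
pose vsub (v : vertex) := (v.1.1 - w.1.1, v.1.2 - w.1.2, v.2 - w.2)%N.
have vaddK v : vsub (vadd v w) = v by case: v => [[x y] z]; rewrite /vsub /vadd /= !addnK.
move=> infu [l Hl]; apply: infu; exists (map vsub l) => v Cuv.
by rewrite -(vaddK v); apply/map_f/Hl/connB_shift.
Qed.

Lemma zloop_infinite w k : (0 < k)%N -> connB w (vadd w (zvec k)) -> infB w.
Proof.
move=> k_gt0 loop.
have loops j : connB w (vadd w (zvec (j * k))).
  elim: j => [|j IHj]; first by rewrite /vadd /zvec /= !addn0; case: w {loop} => [[]]; constructor.
  apply: connected_trans IHj _; rewrite mulSn.
  by have := connB_shift (zvec (j * k)) loop; rewrite vadd_zvec.
move=> [l Hl]; pose Z := (\max_(v <- l) v.2)%N.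
have := @leq_bigmax_seq _ l xpredT (fun v : vertex => v.2) _ (Hl _ (loops Z.+1)) isT.
by rewrite /vadd /= -/Z; nia.
Qed.

Variable K : fieldType.
Local Notation I := (@IB K r s a b lr ls).

Lemma gen_step_IB r' l' a' u v :
  I (mono r' 0 a' - mono 0 l' 0) -> gen_step r' l' a' u v -> I (monov u - monov v).
Proof. by move=> Igen [w [-> ->]]; rewrite !monovD -mulrBr; apply: in_idealMl. Qed.

Lemma IB_gen1 : I (mono r 0 a - mono 0 lr 0).
Proof. by apply: in_ideal_gen; rewrite /gens inE eqxx. Qed.

Lemma IB_gen2 : I (mono s 0 b - mono 0 ls 0).
Proof. by apply: in_ideal_gen; rewrite /gens !inE eqxx orbT. Qed.

Lemma edgeB_IB u v : eB u v -> I (monov u - monov v).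
Proof.
case/edgeB_iff => step.
- exact: gen_step_IB IB_gen1 step.
- exact: gen_step_IB IB_gen2 step.
- by rewrite -opprB; apply/in_idealN/(gen_step_IB IB_gen1 step).
- by rewrite -opprB; apply/in_idealN/(gen_step_IB IB_gen2 step).
Qed.

Lemma connB_IB u v : connB u v -> I (monov u - monov v).
Proof.
elim=> [|x y _ Iux Exy]; first by rewrite subrr; apply: in_ideal0.
by rewrite -(subrKA (monov x)); apply: in_idealD Iux (edgeB_IB Exy).
Qed.

Lemma coef_sum_IB (S : pred vertex) f :
  (forall u v, eB u v -> S u = S v) -> I f -> coef_sum [pred m | S (vertex_of m)] f = 0.
Proof.
move=> S_edge If; rewrite -[f]mul1r; move: 1; move: If.
apply: (@in_ideal_min _ _ (fun g => forall h, coef_sum [pred m | S (vertex_of m)] (h * g) = 0)).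
- by move=> h; rewrite mulr0 coef_sum0.
- by move=> g g' Sg Sg' h; rewrite mulrDr coef_sumD Sg Sg' addr0.
- by move=> g g' Sg' h; rewrite mulrA.
have gen_eq0 r' l' a' : (forall w, eB (vadd w (r', 0, a')%N) (vadd w (0, l', 0)%N)) ->
    forall h, coef_sum [pred m | S (vertex_of m)] (h * (mono r' 0 a' - mono 0 l' 0)) = 0.
  move=> edge_gen h; rewrite mulrBr coef_sumB -!/(monov (_, _, _)) !monovE !coef_sum_mulX.
  apply/eqP; rewrite subr_eq0; apply/eqP/eq_coef_sum => m /=.
  by rewrite !inE !vertex_ofD !mnm_ofK; apply: S_edge.
move=> g; rewrite /gens !inE => /orP[] /eqP->; apply: gen_eq0 => w; apply/edgeB_iff.
  by constructor 1; exists w.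
by constructor 2; exists w.
Qed.

Lemma edgeN_connB u v : edgeN I u v -> connB u v.
Proof.
move=> [rho [rho0 Iuv]].
have S_edge x y : eB x y -> `[< connB u x >] = `[< connB u y >].
  move=> Exy; apply/asboolP/asboolP => Cu.
    exact: connected_trans Cu (connected_edge Exy).
  exact: connected_trans Cu (connected_edge (edgeB_sym Exy)).
have := coef_sum_IB S_edge Iuv; rewrite coef_sumB coef_sumZ.
rewrite -!/(monov (_, _, _)) !monovE !coef_sumX /= !mnm_ofK.
rewrite -!surjective_pairing (asboolT (conn_refl _ _)); case: asboolP => // _.
by rewrite mulr0 subr0 => /eqP; rewrite oner_eq0.
Qed.

Lemma connected_edgeN u v : connected (edgeN I) u v <-> connB u v.
Proof.
split; apply: connected_sub => x y; first by move/edgeN_connB.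
move=> Exy; apply: connected_edge; exists 1; rewrite oner_neq0 scale1r.
by split=> //; apply/edgeB_IB.
Qed.

Lemma infinite_edgeN u : infinite_vertex (edgeN I) u <-> infB u.
Proof. by apply: infinite_vertex_eq => v; apply: connected_edgeN. Qed.

Definition lift_conn (u v : nat * nat * int) := exists n : nat,
  [/\ 0 <= u.2 + n%:Z, 0 <= v.2 + n%:Z & connB (zlift u n) (zlift v n)].

Lemma lift_conn_add u v n k : 0 <= u.2 + n%:Z -> 0 <= v.2 + n%:Z ->
  connB (zlift u n) (zlift v n) -> connB (zlift u (n + k)) (zlift v (n + k)).
Proof. by move=> un vn C; rewrite !zlift_add //; apply: connB_shift. Qed.

Lemma lift_nonneg (z : int) n k : 0 <= z + n%:Z -> 0 <= z + (n + k)%N%:Z.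
Proof. by rewrite PoszD addrA => zn; apply: addr_ge0. Qed.

Lemma lift_conn_trans u v w : lift_conn u v -> lift_conn v w -> lift_conn u w.
Proof.
move=> [n [un vn Cuv]] [k [vk wk Cvw]]; exists (n + k)%N; split.
- exact: lift_nonneg.
- by rewrite addnC; apply: lift_nonneg.
apply: connected_trans (lift_conn_add k un vn Cuv) _.
by rewrite addnC; apply: lift_conn_add.
Qed.

Lemma connected_edgeP u v : connected (edgeP I) u v -> lift_conn u v.
Proof.
elim=> [|x y _ Cux [rho [rho0 [n [xn [yn Ixy]]]]]].
  have un : 0 <= u.2 + (absz u.2)%:Z by case: (u.2) => k //=; rewrite NegzE addNr.
  by exists (absz u.2); split=> //; constructor.
by apply: lift_conn_trans Cux _; exists n; split=> //; apply: edgeN_connB; exists rho.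
Qed.

Lemma infinite_edgeN_edgeP x y (z : nat) :
  infinite_vertex (edgeN I) (x, y, z) -> infinite_vertex (edgeP I) (x, y, z%:Z).
Proof.
move/infinite_edgeN => infu [l Hl]; apply: infu.
pose drop_sign (v : nat * nat * int) : vertex := (v.1.1, v.1.2, absz v.2).
exists (map drop_sign l) => -[[x' y'] z'] Cv; apply/mapP; exists (x', y', z'%:Z) => //.
apply: Hl; apply: (connected_map (F := fun v : vertex => (v.1.1, v.1.2, v.2%:Z))) Cv.
move=> v w Evw; exists 1; split; first exact: oner_neq0.
exists 0%N; rewrite scale1r /= !addn0; do 2 split=> //.
exact: edgeB_IB.
Qed.

Definition column_infinite (v : vertex) := exists uz, infB (v.1.1, v.1.2, uz).

Lemma column_infinite_connB u v : connB u v -> column_infinite u -> column_infinite v.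
Proof.
move=> Cuv [uz infu]; exists (v.2 + uz)%N.
have := infB_shift (w := zvec u.2) infu.
rewrite (_ : vadd _ _ = vadd u (zvec uz)); last by rewrite /vadd /zvec /= !addn0 addnC.
apply: infinite_vertex_connected; rewrite (_ : (_, _, _) = vadd v (zvec uz)).
  exact: connB_shift (connB_sym Cuv).
by rewrite /vadd /zvec /= !addn0.
Qed.

Lemma column_infinite_add u w : column_infinite u -> column_infinite (vadd u w).
Proof. by move=> [uz infu]; exists (uz + w.2)%N; apply: infB_shift infu. Qed.

Lemma column_infinite_zshift u k : column_infinite (vadd u (zvec k)) <-> column_infinite u.
Proof. by rewrite /column_infinite /vadd /zvec /= !addn0. Qed.

Lemma zloop_column w k : (0 < k)%N -> connB w (vadd w (zvec k)) -> column_infinite w.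
Proof. by move=> k_gt0 /(zloop_infinite k_gt0) infw; exists w.2; case: w infw => [[??]?]. Qed.

Definition zconn (u v : vertex) (d : int) :=
  exists j k : nat, j%:Z - k%:Z = d /\ connB (vadd u (zvec j)) (vadd v (zvec k)).

Definition stably_conn u v := zconn u v 0.

Lemma stably_connP u v : stably_conn u v <-> exists n, connB (vadd u (zvec n)) (vadd v (zvec n)).
Proof.
split=> [[j [k [/eqP jk C]]]|[n C]]; last by exists n, n; rewrite subrr.
by move: jk C; rewrite subr_eq0 => /eqP[->]; exists k.
Qed.

Lemma connB_stably u v : connB u v -> stably_conn u v.
Proof. by move=> C; apply/stably_connP; exists 0%N; apply: connB_shift. Qed.

Lemma stably_conn_refl u : stably_conn u u.
Proof. by apply: connB_stably; constructor. Qed.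

Lemma stably_conn_sym u v : stably_conn u v -> stably_conn v u.
Proof. by move/stably_connP => [n C]; apply/stably_connP; exists n; apply: connB_sym. Qed.

Lemma zconn_stably u u' v d : stably_conn u u' -> zconn u v d -> zconn u' v d.
Proof.
move=> /stably_connP[n Cuu'] [j [k [jk Cuv]]]; exists (n + j)%N, (n + k)%N; split.
  by rewrite -jk; lia.
have := connB_shift (zvec j) Cuu'; have := connB_shift (zvec n) Cuv.
rewrite !vadd_zvec [(j + n)%N]addnC [(k + n)%N]addnC => C1 C2.
exact: connected_trans (connB_sym C2) C1.
Qed.

Lemma stably_conn_trans u v w : stably_conn u v -> stably_conn v w -> stably_conn u w.
Proof. by move=> Suv; apply: zconn_stably (stably_conn_sym Suv). Qed.

Lemma stably_conn_add u v w : stably_conn u v -> stably_conn (vadd u w) (vadd v w).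
Proof.
move/stably_connP => [n C]; apply/stably_connP; exists n.
by rewrite ![vadd (vadd _ w) _]vaddAC; apply: connB_shift.
Qed.

Lemma zconn_zshift u v d k : zconn (vadd u (zvec k)) v d <-> zconn u v (d + k%:Z).
Proof.
split=> [[j [j' [jj' C]]]|[j [j' [jj' C]]]].
  by exists (k + j)%N, j'; rewrite -vadd_zvec; split=> //; lia.
have [kj|jk] := leqP k j.
  by exists (j - k)%N, j'; rewrite vadd_zvec subnKC //; split=> //; lia.
exists 0%N, (j' + (k - j))%N; split; first by lia.
have := connB_shift (zvec (k - j)) C; rewrite !vadd_zvec (subnKC (ltnW jk)).
by rewrite /vadd /zvec /= !addn0.
Qed.

Lemma zconn_column u v d : zconn u v d -> column_infinite u -> column_infinite v.
Proof.
move=> [j [k [_ C]]] /(column_infinite_zshift _ j).2 colu.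
exact/(column_infinite_zshift _ k)/(column_infinite_connB C colu).
Qed.

(* Two different shifts would give a loop in the z-direction above [v]. *)
Lemma zconn_unique u v d d' : ~ column_infinite v -> zconn u v d -> zconn u v d' -> d = d'.
Proof.
move=> colv [j [k [<- C]]] [j' [k' [<- C']]]; apply: contrapT => neq.
have := connB_shift (zvec j') C; have := connB_shift (zvec j) C'.
rewrite !vadd_zvec [(j' + j)%N]addnC => C1 C2; have C21 := connected_trans (connB_sym C2) C1.
have [lt|lt|eq] := ltngtP (k + j') (k' + j); last by apply: neq; lia.
  apply: colv; apply/(column_infinite_zshift _ (k + j')).
  apply: (@zloop_column _ (k' + j - (k + j'))); first by rewrite subn_gt0.
  by rewrite vadd_zvec subnKC // ltnW.
apply: colv; apply/(column_infinite_zshift _ (k' + j)).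
apply: (@zloop_column _ (k + j' - (k' + j))); first by rewrite subn_gt0.
by rewrite vadd_zvec subnKC; [apply: connB_sym | apply: ltnW].
Qed.

Lemma stably_conn_saturation m m' :
  stably_conn (vertex_of m) (vertex_of m') -> saturation_z I ('X_[m] - 'X_[m']).
Proof.
move/stably_connP => [n /connB_IB]; rewrite !monovD monov_zvec !monovE !vertex_ofK.
by rewrite -mulrBl mulrC; exists n.
Qed.

Definition stably_rel : rel 'X_{1..3} :=
  fun m m' => `[< stably_conn (vertex_of m) (vertex_of m') >].

Lemma stably_rel_refl : reflexive stably_rel.
Proof. by move=> m; apply/asboolP/stably_conn_refl. Qed.

Lemma stably_rel_sym : ssrbool.symmetric stably_rel.
Proof. by move=> m m'; apply/asboolP/asboolP; apply: stably_conn_sym. Qed.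

Lemma stably_rel_trans : transitive stably_rel.
Proof. by move=> m' m m'' /asboolP S1 /asboolP S2; apply/asboolP/(stably_conn_trans S1 S2). Qed.

Definition zconn_sum (f : {mpoly K[3]}) v d :=
  coef_sum [pred m | `[< zconn (vertex_of m) v d >]] f.

Lemma zconn_sum_class f m :
  zconn_sum f (vertex_of m) 0 = \sum_(m' <- msupp f | stably_rel m m') f@_m'.
Proof. by apply: eq_bigl => m'; rewrite stably_rel_sym. Qed.

Section StablyClosed.
Variables (S : pred vertex) (f : {mpoly K[3]}).
Hypothesis S_closed : forall u v, stably_conn u v -> S u -> S v.
Hypothesis S_class0 : forall v, S v -> zconn_sum f v 0 = 0.

Let S_rel_closed m m' : stably_rel m m' -> S (vertex_of m) -> S (vertex_of m').
Proof. by move/asboolP; apply: S_closed. Qed.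

Let class0 : {in msupp f, forall m, S (vertex_of m) ->
  \sum_(m' <- msupp f | stably_rel m m') f@_m' = 0}.
Proof. by move=> m _ Sm; rewrite -zconn_sum_class S_class0. Qed.

Lemma stably_closed_coef_sum : coef_sum [pred m | S (vertex_of m)] f = 0.
Proof.
exact: classwise_sum_eq0 stably_rel_refl stably_rel_sym stably_rel_trans S_rel_closed class0.
Qed.

Lemma stably_closed_saturation :
  saturation_z I (\sum_(m <- msupp f | S (vertex_of m)) f@_m *: 'X_[m]).
Proof.
apply: (classwise_sum_filter (saturation_z0 _) (@saturation_zD _ _) (@saturation_zZ _ _)
  stably_rel_refl stably_rel_sym stably_rel_trans _ S_rel_closed class0).
by move=> m m' /asboolP; apply: stably_conn_saturation.
Qed.

End StablyClosed.

Definition pure_z (w : 'X_{1..3}) := (w ix == 0%N) && (w iy == 0%N).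

Lemma pure_zE w : pure_z w -> w = mnm_of (zvec (w iz)).
Proof. by case/andP=> /eqP wx /eqP wy; rewrite -[LHS]vertex_ofK /vertex_of wx wy. Qed.

Definition column_gens (g : {mpoly K[3]}) :=
  exists ux uy uz : nat, infB (ux, uy, uz) /\ g = mono ux uy 0.

Section Weight.
Variables (p q : nat).
Hypotheses (lr_q : (lr * q = p * r)%N) (ls_q : (ls * q = p * s)%N).
Hypotheses (p_gt0 : (0 < p)%N) (q_gt0 : (0 < q)%N).
Local Notation weight := (weight p q).

Lemma weight_bound u : (u.1.1 <= weight u)%N /\ (u.1.2 <= weight u)%N.
Proof.
by split; [apply: leq_trans (leq_addr _ _) | apply: leq_trans (leq_addl _ _)]; exact: leq_pmull.
Qed.

Lemma connB_weight u v : connB u v -> weight u = weight v.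
Proof.
elim=> // x y _ -> /edgeB_iff.
by case=> -[w [-> ->]]; rewrite /weight /vadd /=; nia.
Qed.

(* The weight bounds the x- and y-coordinates of a component, so an infinite component
   contains two vertices differing only in z. *)
Lemma infinite_zloop u : infB u -> exists2 k, (0 < k)%N & connB u (vadd u (zvec k)).
Proof.
move=> infu; apply: contrapT => no_loop; apply: infu.
apply: (bounded_section_finite (M := weight u)).
  by move=> v /connB_weight ->; apply: weight_bound.
move=> x y z z' Cuv Cuv'; rewrite ltEnat /= => lt_zz'.
have z'E : (x, y, z') = vadd (x, y, z) (zvec (z' - z)).
  by rewrite /vadd /= !addn0 subnKC // ltnW.
apply: no_loop; exists (z' - z)%N; first by rewrite subn_gt0.
have Czz' : connB (x, y, z) (vadd (x, y, z) (zvec (z' - z))).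
  by rewrite -z'E; apply: connected_trans (connB_sym Cuv) Cuv'.
exact: connected_trans Cuv (connected_trans Czz' (connB_shift _ (connB_sym Cuv))).
Qed.

Lemma infinite_edgeP_column u : infinite_vertex (edgeP I) u ->
  exists uz : nat, infinite_vertex (edgeN I) (u.1.1, u.1.2, uz).
Proof.
move=> infu; apply: contrapT => finite_column; apply: infu.
apply: (bounded_section_finite (M := weight (u.1.1, u.1.2, 0%N))).
  by move=> v /connected_edgeP [n [_ _ /connB_weight]]; rewrite /zlift /weight /= => ->;
    apply: (weight_bound (_, _, _)).
move=> x y z z' Cuv Cuv' lt_zz'.
have [n [un vn Cuv_n]] := connected_edgeP Cuv.
have [n' [un' vn' Cuv'_n']] := connected_edgeP Cuv'.
set N := (n + n')%N.
have Cu_v := lift_conn_add n' un vn Cuv_n.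
have Cu_v' := lift_conn_add n un' vn' Cuv'_n'; rewrite addnC in Cu_v'.
have vN : 0 <= z + N%:Z by apply: lift_nonneg.
have v'E : zlift (x, y, z') N = vadd (zlift (x, y, z) N) (zvec (absz (z' - z))).
  move: vN lt_zz'; rewrite /zlift /vadd /zvec /= !addn0 => vN lt_zz'; congr (_, _, _); lia.
apply: finite_column; exists (absz (u.2 + N%:Z)); apply/infinite_edgeN.
apply: (infinite_vertex_connected Cu_v).
apply: (@zloop_infinite _ (absz (z' - z))); first by rewrite absz_gt0 subr_eq0 gt_eqF.
by rewrite -v'E; apply: connected_trans (connB_sym Cu_v) Cu_v'.
Qed.

Lemma zconn_weight u v d : zconn u v d -> weight u = weight v.
Proof. by move=> [j [k [_ /connB_weight]]]; rewrite /weight /vadd /zvec /= !addn0. Qed.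

Lemma weight_gt0 w : ~~ pure_z w -> (0 < weight (vertex_of w))%N.
Proof.
by rewrite negb_and /weight /= => /orP[] w0; [apply: ltn_addr | apply: ltn_addl];
  rewrite muln_gt0 ?p_gt0 ?q_gt0 lt0n.
Qed.

Section StableClassSums.
Variables (f g : {mpoly K[3]}).
Hypothesis Igf : I (g * f).
Hypothesis g_zcoef : exists k, g@_(mnm_of (zvec k)) != 0.

Let zexps := [seq w iz | w : 'X_{1..3} <- msupp g & pure_z w].

(* Apply the linear form of [zconn _ v d] to [g f]: the terms of [g] involving x or y
   contribute sums over vertices of smaller weight. *)
Lemma zconn_sum_recurrence v d :
  (forall u, ~ column_infinite u -> (weight u < weight v)%N -> zconn_sum f u 0 = 0) ->
  ~ column_infinite v ->
  \sum_(k <- zexps) g@_(mnm_of (zvec k)) * zconn_sum f v (d + k%:Z) = 0.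
Proof.
move=> IH colv.
have S_edge x y : eB x y -> `[< zconn x v d >] = `[< zconn y v d >].
  move=> Exy; apply/asboolP/asboolP; apply: zconn_stably; apply: connB_stably.
    exact: connected_edge.
  exact: connected_edge (edgeB_sym Exy).
have := coef_sum_IB S_edge Igf; rewrite coef_sum_mull (bigID pure_z) /= [X in _ + X]big1.
  rewrite addr0 => eq0; rewrite -[RHS]eq0 big_map big_filter; apply: eq_bigr => w pw.
  rewrite -(pure_zE pw); congr (_ * _); apply: eq_coef_sum => m; rewrite !inE.
  rewrite vertex_ofD [in vertex_of w](pure_zE pw) mnm_ofK.
  by case: (zconn_zshift (vertex_of m) v d (w iz)) => zs1 zs2; apply/asboolP/asboolP.
move=> w npw; apply/eqP; rewrite mulf_eq0; apply/orP; right; apply/eqP.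
rewrite (@eq_coef_sum _ _ _ [pred m | `[< zconn (vadd (vertex_of m) (vertex_of w)) v d >]]);
  last by move=> m; rewrite !inE vertex_ofD.
apply: (@stably_closed_coef_sum [pred u | `[< zconn (vadd u (vertex_of w)) v d >]]).
  move=> x y Sxy /asboolP Cx; apply/asboolP; apply: zconn_stably Cx.
  exact: stably_conn_add.
move=> u /asboolP Cu; apply: IH.
  by move=> colu; apply/colv/(zconn_column Cu)/column_infinite_add.
rewrite -(zconn_weight Cu) /weight /vadd /=.
by rewrite !mulnDr addnACA -[X in (X < _)%N]addn0 ltn_add2l; apply: weight_gt0.
Qed.

Lemma zconn_sum_finsupp v : ~ column_infinite v ->
  exists D : seq int, forall d, zconn_sum f v d != 0 -> d \in D.
Proof.
move=> colv; pose dm m : int :=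
  if pselect (exists d, zconn (vertex_of m) v d) is left H then projT1 (cid H) else 0.
exists (map dm (msupp f)) => d; apply: contraR => dD.
rewrite /zconn_sum /coef_sum big1_seq // => m /andP[/asboolP Cm fm].
case/mapP: dD; exists m => //; rewrite /dm; case: pselect => [H|[]]; last by exists d.
by case: cid => d' Cm' /=; apply: zconn_unique colv Cm Cm'.
Qed.

Lemma stable_class_sum_eq0 v : ~ column_infinite v -> zconn_sum f v 0 = 0.
Proof.
have [n] := ubnP (weight v); elim: n v => // n IHn v /ltnSE wv colv.
have [D D_supp] := zconn_sum_finsupp colv.
apply: (@correlation_eq0 _ _ (fun k => g@_(mnm_of (zvec k))) zexps D) => //.
- rewrite map_inj_in_uniq ?filter_uniq ?msupp_uniq // => w w'.
  by rewrite !mem_filter => /andP[pw _] /andP[pw' _] ww'; rewrite (pure_zE pw) ww' -pure_zE.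
- move=> k gk; apply/mapP; exists (mnm_of (zvec k)); last by rewrite mnm_of_z.
  by rewrite mem_filter mcoeff_msupp gk /pure_z mnm_of_x mnm_of_y.
move=> d; apply: zconn_sum_recurrence colv => u colu wu.
by apply: IHn colu; apply: leq_trans wu wv.
Qed.

End StableClassSums.

Lemma primary_component_split f : primary_component_xy I f ->
  ideal_add (saturation_z I) (in_ideal column_gens) f.
Proof.
move=> [g [g_xy Igf]]; have class0 := stable_class_sum_eq0 Igf (not_in_xy_zcoef g_xy).
pose fin (u : vertex) := `[< ~ column_infinite u >].
exists (\sum_(m <- msupp f | fin (vertex_of m)) f@_m *: 'X_[m]).
exists (\sum_(m <- msupp f | ~~ fin (vertex_of m)) f@_m *: 'X_[m]).
split; last split; last by rewrite {1}(mpolyE f) (bigID (fin \o vertex_of)).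
  apply: stably_closed_saturation => [u v Suv /asboolP colu|v /asboolP]; last exact: class0.
  by apply/asboolP => colv; apply/colu/(zconn_column (stably_conn_sym Suv)).
apply: in_ideal_sum => m /asboolPn /contrapT [uz infm].
have -> : 'X_[m] = mono (m ix) (m iy) 0 * vz ^+ (m iz) :> {mpoly K[3]}.
  by rewrite -[in LHS](vertex_ofK m) -monovE /monov /mono expr0 mulr1.
by rewrite scalerAr; apply/in_idealMr/in_ideal_gen; exists (m ix), (m iy), uz.
Qed.

Lemma column_gen_local_xy g : column_gens g -> local_xy IBgens g.
Proof.
move=> [ux [uy [uz [infu ->]]]]; have [k k_gt0 loop] := infinite_zloop infu.
exists (vz ^+ uz - vz ^+ (uz + k)); split.
  rewrite /zpart rmorphB /= -!/(zpart _) !zpart_vz; apply/eqP => /(congr1 (coefp uz)) /=.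
  rewrite coefB !coefXn eqxx (_ : (uz == uz + k)%N = false); last by apply/eqP; lia.
  by rewrite coef0 subr0 => /eqP; rewrite oner_eq0.
have := connB_IB loop; rewrite (_ : (ux, uy, uz) = vadd (ux, uy, 0%N) (zvec uz)).
  by rewrite vadd_zvec !monovD !monov_zvec -mulrBr mulrC.
by rewrite /vadd /= !addn0.
Qed.

Lemma primary_component_of_split f :
  ideal_add (saturation_z I) (in_ideal column_gens) f -> primary_component_xy I f.
Proof.
move=> [h [g [sat_h [Ig ->]]]]; apply/local_xy_primary/local_xyD.
  exact: saturation_local_xy.
move: Ig; apply: in_ideal_min => [|g1 g2|g1 g2|]; last exact: column_gen_local_xy.
- exact: saturation_local_xy (saturation_z0 _).
- exact: local_xyD.
- exact: local_xyMl.
Qed.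

End Weight.

End BinomialGraph.

Theorem proposition4p3 (K : closedFieldType) (r s a b p q : nat) :
  [pchar K] =i pred0 ->
  (0 < r)%N -> (0 < s)%N -> (0 < a)%N -> (0 < b)%N ->
  (a <= b)%N -> (s <= r)%N ->
  (0 < p)%N -> (0 < q)%N -> coprime p q ->
  (* B is an integer matrix: lambda r and lambda s are integers *)
  (q %| p * r)%N -> (q %| p * s)%N ->
  (* B has rank 2 *)
  \rank (\matrix_(i < 3, j < 2)
           nth 0 (nth [::]
             [:: [:: r%:Q; s%:Q];
                 [:: - (p%:Q / q%:Q) * r%:Q; - (p%:Q / q%:Q) * s%:Q];
                 [:: a%:Q; b%:Q]] i) j) = 2%N ->
  let lr := (p * r %/ q)%N in
  let ls := (p * s %/ q)%N in
  let I := @IB K r s a b lr ls in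
  let c1 : int * int * int := (r%:Z, - lr%:Z, a%:Z) in
  let c2 : int * int * int := (s%:Z, - ls%:Z, b%:Z) in
  (forall ux uy : nat,
     (exists uz : int, infinite_vertex (edgeP I) (ux, uy, uz)) <->
     (exists uz : nat, infinite_vertex (edgeN I) (ux, uy, uz)))
  /\
  (forall f : {mpoly K[3]},
     primary_component_xy I f <->
     ideal_add (saturation_z I)
       (in_ideal (fun g => exists ux uy uz : nat,
                    infinite_vertex (edgeB c1 c2) (ux, uy, uz) /\
                    g = mono ux uy 0)) f).
Proof.
move=> _ _ _ _ _ _ _ p_gt0 q_gt0 _ q_pr q_ps _ lr ls I c1 c2.
have lr_q : (lr * q = p * r)%N by rewrite divnK.
have ls_q : (ls * q = p * s)%N by rewrite divnK.
split=> [ux uy|f]; split.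
- by move=> [uz /(infinite_edgeP_column lr_q ls_q p_gt0 q_gt0)].
- by move=> [uz /infinite_edgeN_edgeP infu]; exists uz%:Z.
- exact: (primary_component_split (a := a) (b := b) (K := K) lr_q ls_q p_gt0 q_gt0).
- exact: (primary_component_of_split (a := a) (b := b) (K := K) lr_q ls_q p_gt0 q_gt0).
Qed.
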